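(* Let $\mu$ be strict and $\alpha\in\mathcal Q(\mu,\overline\mu)$, and let $m=m(\alpha)$. Then $\alpha$ can be written uniquely as $$\alpha=(b_1^m,b_2,b_3,\ldots)+(w^m)$$ with $w\ge0$, $b_1>b_2$, and $(b_1^m,b_2,b_3,\ldots)\in\mathcal Q(\mu,\mu+(1))$.
   Context: Partitions are weakly decreasing sequences of nonnegative integers with finitely many nonzero parts, identified with Ferrers boards. $\alpha$ contains $\mu$ if deleting some rows and some columns of the Ferrers board of $\alpha$ and top/left-justifying yields $\mu$; otherwise $\alpha$ avoids $\mu$. Strict: positive parts distinct. $m(\alpha)$ is the multiplicity of the largest part of $\alpha$. $\alpha+\beta$ is the componentwise sum; $(w^m)$ has $m$ parts equal to $w$. $\overline\mu=(\mu_1+1,\mu_1,\mu_2,\ldots)$. $\mathcal Q(\tau,\mu)$ is the set of partitions of positive weight containing $\tau$ and avoiding $\mu$. *)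

From mathcomp Require Import all_boot.
Set Implicit Arguments. Unset Strict Implicit. Unset Printing Implicit Defensive.

(* A partition is represented by the list of its positive parts, weakly
   decreasing (trailing zero parts are omitted). *)
Definition is_partition (s : seq nat) : bool :=
  sorted geq s && all (fun x => 0 < x) s.

Definition is_strict (s : seq nat) : bool := is_partition s && uniq s.

Definition weight (s : seq nat) : nat := sumn s.

Definition psum (s t : seq nat) : seq nat :=
  mkseq (fun i => nth 0 s i + nth 0 t i) (maxn (size s) (size t)).

Definition mult_largest (a : seq nat) : nat := count_mem (head 0 a) a.

Definition mubar (mu : seq nat) : seq nat := (head 0 mu).+1 :: mu.

(* Containment: keep the rows with (strictly increasing) indices rs and the
   columns with (strictly increasing) indices cs of the Ferrers board of a,
   delete all others, and top/left-justify. Row r_i of the result has length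
   #{ c in cs | c < a_{r_i} }. *)
Definition contains (a mu : seq nat) : Prop :=
  exists rs cs : seq nat,
    sorted ltn rs /\ sorted ltn cs /\
    [seq x <- [seq count (fun c => c < nth 0 a r) cs | r <- rs] | 0 < x] = mu.

Definition avoids (a mu : seq nat) : Prop := ~ contains a mu.

Definition inQ (tau mu a : seq nat) : Prop :=
  is_partition a /\ 0 < weight a /\ contains a tau /\ avoids a mu.

(* alpha = (b1^m, b2, b3, ...) + (w^m) with b1 > b2 and
   (b1^m, b2, b3, ...) in Q(mu, mu + (1)); bs = (b2, b3, ...). *)
Definition decomp (mu a : seq nat) (m b1 : nat) (bs : seq nat) (w : nat) : Prop :=
  is_partition bs /\ head 0 bs < b1 /\
  inQ mu (psum mu [:: 1]) (nseq m b1 ++ bs) /\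
  a = psum (nseq m b1 ++ bs) (nseq m w).

From mathcomp Require Import all_boot zify.
From Stdlib Require Import Classical.
Set Implicit Arguments. Unset Strict Implicit. Unset Printing Implicit Defensive.

(* 1. Containment of a strict partition [nu] in a partition [a] depends only on
      the SET of parts of [a]: keeping a set of columns amounts to a column
      profile [g] (number of kept columns among the first [v]), which starts at
      0 and grows by at most one per column, and [a] contains [nu] iff some
      such [g] maps parts of [a] onto every part of [nu] ([realizes]).
   2. Capping a profile ([capg]) gives local moves on the largest part [x]
      above the other parts [W]: adding it on top of a realization of [mu]
      realizes [mubar mu]; a needed top part can be raised (turning [mu] into
      [mu + (1)]) or lowered (turning [mu + (1)] into [mu]).
   3. Writing [alpha = (x^m, u)], avoidance of [mubar mu] forces [u] alone to
      realize neither [mu] nor [mu + (1)]. Then the values [b] for which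
      [(b^m, u)] lies in Q(mu, mu + (1)) are the thresholds "[b :: u] realizes
      [mu] but not [mu + (1)]": lowering [x] reaches one, raising shows there
      is at most one. The decomposition is [b1 = b], [w = x - b], [bs = u]. *)

(* A column profile: [g v] counts the kept columns among the first [v]
   columns of a Ferrers board, so it starts at 0 and grows by 0 or 1. *)
Definition step_fun (g : nat -> nat) : Prop :=
  g 0 = 0 /\ forall u, g u <= g u.+1 /\ g u.+1 <= (g u).+1.

Definition realized_by (g : nat -> nat) (S nu : seq nat) : Prop :=
  forall y, y \in nu -> exists2 v, v \in S & g v = y.

(* The parts [S] realize [nu] through some column profile; for a partition
   [a] and a strict [nu] this is equivalent to [contains a nu]. *)
Definition realizes (S nu : seq nat) : Prop :=
  exists2 g, step_fun g & realized_by g S nu.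

Lemma step_fun_mono g : step_fun g -> {homo g : u v / u <= v}.
Proof.
move=> [_ st]; apply: homo_leq => [//|y x z|u]; first exact: leq_trans.
by case: (st u).
Qed.

Lemma realized_by_cons g S y nu :
  (exists2 v, v \in S & g v = y) -> realized_by g S nu -> realized_by g S (y :: nu).
Proof. by move=> hy hnu z; rewrite inE => /orP [/eqP -> //|/hnu]. Qed.

Lemma realized_by_sub g S S' nu :
  {subset S <= S'} -> realized_by g S nu -> realized_by g S' nu.
Proof. by move=> sub h y /h [v /sub]; exists v. Qed.

Lemma realizes_sub S S' nu : {subset S <= S'} -> realizes S nu -> realizes S' nu.
Proof. by move=> sub [g st h]; exists g => //; apply: realized_by_sub h. Qed.

Lemma realizes_eq_mem S S' nu : S =i S' -> realizes S nu <-> realizes S' nu.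
Proof. by move=> eqS; split; apply: realizes_sub => v; rewrite eqS. Qed.

Definition col_count (cs : seq nat) (v : nat) : nat := count (fun c => c < v) cs.

Lemma col_count0 cs : col_count cs 0 = 0.
Proof. by rewrite /col_count; elim: cs. Qed.

Lemma col_countS cs v : col_count cs v.+1 = col_count cs v + count_mem v cs.
Proof.
rewrite /col_count; elim: cs => //= c cs ->.
case: (ltngtP c v) => [h|h|->].
- by rewrite ltnS (ltnW h) /=; lia.
- by rewrite ltnS leqNgt h /=; lia.
- by rewrite ltnSn /=; lia.
Qed.

Lemma col_count_step cs : uniq cs -> step_fun (col_count cs).
Proof.
move=> U; split; first exact: col_count0.
by move=> u; rewrite col_countS count_uniq_mem //; case: (u \in cs) => /=; lia.
Qed.

Lemma contains_realizes a nu : contains a nu -> realizes a nu.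
Proof.
move=> [rs [cs [_ [Scs <-]]]].
exists (col_count cs); first exact/col_count_step/(sorted_uniq ltn_trans ltnn).
move=> y; rewrite mem_filter => /andP [y0 /mapP [r _ yE]]; subst y.
exists (nth 0 a r) => //; case: (ltnP r (size a)) => h; first exact: mem_nth.
by rewrite nth_default // in y0; move: y0; rewrite -/(col_count cs 0) col_count0.
Qed.

Lemma col_count_jumps g N v : step_fun g -> v <= N ->
  col_count [seq c <- iota 0 N | g c.+1 != g c] v = g v.
Proof.
move=> [g0 st] vN; rewrite /col_count count_filter -(subnKC vN) iotaD count_cat.
have -> : count (predI (fun c => c < v) (fun c => g c.+1 != g c))
                (iota (0 + v) (N - v)) = 0.
  apply/eqP; rewrite -leqn0 leqNgt -has_count; apply/hasP => -[c].
  by rewrite mem_iota /= => /andP [h _] /andP [h2 _]; lia.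
rewrite addn0; elim: v {vN} => [|v IH]; first by rewrite g0.
rewrite -addn1 iotaD add0n count_cat /= addn0 addn1.
have -> : count (predI (fun c => c < v.+1) (fun c => g c.+1 != g c)) (iota 0 v) =
          count (predI (fun c => c < v) (fun c => g c.+1 != g c)) (iota 0 v).
  apply: eq_in_count => c; rewrite mem_iota add0n /= => h.
  by rewrite ltnS (ltnW h) h.
rewrite IH ltnSn /=; case: (st v) => h1 h2.
by case: eqP => /= [->|jump]; lia.
Qed.

Lemma mem_le_sumn v a : v \in a -> v <= sumn a.
Proof. by elim: a => //= x a IH; rewrite inE => /orP [/eqP ->|/IH]; lia. Qed.

Lemma is_strictE nu : is_strict nu = sorted gtn nu && all (fun y => 0 < y) nu.
Proof. by rewrite /is_strict /is_partition gtn_sorted_uniq_geq andbC andbA. Qed.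

(* Conversely, keep the columns where the profile jumps and, for each part of
   the strictly decreasing [nu], the first row realizing it; those rows come
   in increasing order because the profile is monotone. *)
Lemma realizes_contains a nu : is_partition a -> is_strict nu ->
  realizes a nu -> contains a nu.
Proof.
rewrite is_strictE => /andP [Sa _] /andP [Snu Pnu] [g st Hw].
pose cs := [seq c <- iota 0 (sumn a) | g c.+1 != g c].
have cs_g v : v \in a -> col_count cs v = g v.
  by move=> va; apply: col_count_jumps => //; apply: mem_le_sumn.
pose row y := find (fun v => col_count cs v == y) a.
have has_row y : y \in nu -> has (fun v => col_count cs v == y) a.
  by move=> /Hw [v va gv]; apply/hasP; exists v => //; rewrite cs_g // gv.
have row_size y : y \in nu -> row y < size a by move=> /has_row; rewrite has_find.
have row_count y : y \in nu -> col_count cs (nth 0 a (row y)) = y.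
  by move=> /has_row h; apply/eqP/(nth_find 0 h).
exists (map row nu), cs; split; [|split].
- rewrite sorted_map; apply: (@sub_in_sorted _ (mem nu) gtn) Snu; last exact/allP.
  move=> y1 y2 h1 h2 /= lt; rewrite ltnNge; apply/negP => le.
  have /= := sorted_leq_nth (rev_trans leq_trans) leqnn 0 Sa (row y2) (row y1)
    (row_size _ h2) (row_size _ h1) le.
  move=> /(step_fun_mono st); rewrite -!cs_g ?mem_nth ?row_size // !row_count //.
  lia.
- exact/(sorted_filter ltn_trans)/iota_ltn_sorted.
- have -> : [seq col_count cs (nth 0 a r) | r <- map row nu] = nu.
    by rewrite -map_comp -[RHS]map_id; apply/eq_in_map => y /row_count.
  exact/all_filterP.
Qed.

(* Capping a column profile: follow [min g c] up to column [t], then jump to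
   [c.+1]; this lets one move or add the value of the top part freely. *)
Definition capg (g : nat -> nat) (t c u : nat) : nat :=
  if u <= t then minn (g u) c else c.+1.

Lemma capg_le g t c u : u <= t -> capg g t c u = minn (g u) c.
Proof. by rewrite /capg => ->. Qed.

Lemma capg_gt g t c u : t < u -> capg g t c u = c.+1.
Proof. by rewrite /capg; case: leqP. Qed.

Lemma capg_step g t c : step_fun g -> c <= g t -> step_fun (capg g t c).
Proof.
move=> [g0 st] ct; split; first by rewrite capg_le // g0 min0n.
by move=> u; have := st u; rewrite /capg; case: (ltngtP u t) => [h|h|->]; lia.
Qed.

Lemma capg_realized_by g t c S nt : step_fun g -> c <= g t ->
  {in nt, forall y, y < c} -> realized_by g S nt -> realized_by (capg g t c) S nt.
Proof.
move=> st ct nt_c Hw y hy; have [v vS gv] := Hw y hy; exists v => //.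
have yc := nt_c y hy; case: (leqP v t) => vt; first by rewrite capg_le // gv; lia.
by have := step_fun_mono st (ltnW vt); lia.
Qed.

Section TopPart.
Variables (W : seq nat) (x : nat).
Hypothesis W_lt : {in W, forall w, w < x}.

Lemma realizes_top_split (n1 : nat) (nt : seq nat) :
  {in nt, forall y, y < n1} -> realizes (x :: W) (n1 :: nt) ->
  realizes W (n1 :: nt) \/ exists2 g, step_fun g & g x = n1 /\ realized_by g W nt.
Proof.
move=> nt_lt [g st Hw]; have [v1] := Hw n1 (mem_head _ _).
rewrite inE => /orP [/eqP -> gx | v1W gv1].
- right; exists g => //; split => // y hy.
  have [v] := Hw y (@mem_behead _ (n1 :: nt) y hy).
  rewrite inE => /orP [/eqP -> | vW] gv; last by exists v.
  by have := nt_lt y hy; rewrite -gv gx ltnn.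
- left; exists g => // y hy; have [v] := Hw y hy.
  rewrite inE => /orP [/eqP -> | vW] gv; last by exists v.
  move: hy; rewrite inE => /orP [/eqP -> | hy]; first by exists v1.
  by have := step_fun_mono st (ltnW (W_lt v1W)); have := nt_lt y hy; lia.
Qed.

Lemma realizes_top_pos (n1 : nat) (nt : seq nat) :
  0 < n1 -> realizes (x :: W) (n1 :: nt) -> 0 < x.
Proof.
move=> n1_pos [g [g0 _] Hw]; have [v] := Hw n1 (mem_head _ _).
rewrite inE => /orP [/eqP -> | /W_lt vx] gv; last exact: leq_ltn_trans vx.
by move: n1_pos; rewrite -gv !lt0n; apply: contra => /eqP ->; rewrite g0.
Qed.

(* If [W] realizes some [n :: nt] with [n1 <= n], then adding a part [x] on top
   realizes [(n1 + 1, n1, nt)]: this is how [mubar] arises. *)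
Lemma realizes_add_top (n n1 : nat) (nt : seq nat) :
  {in nt, forall y, y < n1} -> n1 <= n -> realizes W (n :: nt) ->
  realizes (x :: W) (n1.+1 :: n1 :: nt).
Proof.
move=> nt_lt n1n [g st Hw]; have [v1 v1W gv1] := Hw n (mem_head _ _).
exists (capg g v1 n1); first by apply: capg_step; rewrite ?gv1.
apply: realized_by_cons; first by exists x; rewrite ?mem_head ?capg_gt ?W_lt.
apply: realized_by_cons.
  by exists v1; rewrite ?inE ?v1W ?orbT ?capg_le ?gv1 //; apply/minn_idPr.
apply: (realized_by_sub (@mem_behead _ (x :: W))).
apply: capg_realized_by; rewrite ?gv1 // => y hy.
by apply: Hw; rewrite inE hy orbT.
Qed.

Lemma avoid_add_top (n1 : nat) (nt : seq nat) : {in nt, forall y, y < n1} ->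
  ~ realizes (x :: W) (n1.+1 :: n1 :: nt) ->
  ~ realizes W (n1 :: nt) /\ ~ realizes W (n1.+1 :: nt).
Proof.
move=> nt_lt nR; split; first by move=> /(realizes_add_top nt_lt (leqnn n1)).
by move=> /(realizes_add_top nt_lt (leqnSn n1)).
Qed.

Lemma realizes_raise_top (x' n1 : nat) (nt : seq nat) :
  {in nt, forall y, y < n1} -> x < x' -> ~ realizes W (n1 :: nt) ->
  realizes (x :: W) (n1 :: nt) -> realizes (x' :: W) (n1.+1 :: nt).
Proof.
move=> nt_lt xx' nW /(realizes_top_split nt_lt) [//|[g st [gx Hw]]].
exists (capg g x n1); first by apply: capg_step; rewrite ?gx.
apply: realized_by_cons; first by exists x'; rewrite ?mem_head ?capg_gt.
apply: (realized_by_sub (@mem_behead _ (x' :: W))).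
by apply: capg_realized_by; rewrite ?gx.
Qed.

Lemma realizes_lower_top (n1 : nat) (nt : seq nat) :
  {in nt, forall y, y < n1} -> ~ realizes W (n1.+1 :: nt) ->
  realizes (x :: W) (n1.+1 :: nt) -> realizes (x.-1 :: W) (n1 :: nt).
Proof.
move=> nt_lt nW.
have nt_lt' : {in nt, forall y, y < n1.+1} by move=> y /nt_lt /ltnW.
move=> Hx; have x_pos := realizes_top_pos (ltn0Sn n1) Hx.
have [//|[g st [gx Hw]]] := realizes_top_split nt_lt' Hx.
have [_ gS] := st.
exists (capg g x n1); first by apply: capg_step; rewrite ?gx.
apply: realized_by_cons.
  exists x.-1; first exact: mem_head.
  by rewrite capg_le ?leq_pred //; have := gS x.-1; rewrite prednK // gx; lia.
apply: (realized_by_sub (@mem_behead _ (x.-1 :: W))).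
by apply: capg_realized_by; rewrite ?gx.
Qed.
End TopPart.

Section Threshold.
Variables (m1 : nat) (mt u : seq nat).
Hypothesis mt_lt : {in mt, forall y, y < m1}.
Hypothesis u_no_mu : ~ realizes u (m1 :: mt).
Hypothesis u_no_plus : ~ realizes u (m1.+1 :: mt).

Definition threshold (b : nat) : Prop :=
  realizes (b :: u) (m1 :: mt) /\ ~ realizes (b :: u) (m1.+1 :: mt).

(* Lowering the top part one unit at a time from any [n] realizing
   [m1 :: mt] reaches a threshold. *)
Lemma threshold_exists n : {in u, forall w, w < n} ->
  realizes (n :: u) (m1 :: mt) ->
  exists b, [/\ {in u, forall w, w < b}, b <= n & threshold b].
Proof.
elim: n => [|n IH] u_lt Hn.
  exists 0; split => //; split => // Hplus.
  by have := realizes_top_pos u_lt (ltn0Sn m1) Hplus.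
have [Hplus|no_plus] := classic (realizes (n.+1 :: u) (m1.+1 :: mt));
  last by exists n.+1.
have Hn' : realizes (n :: u) (m1 :: mt)
  := realizes_lower_top u_lt mt_lt u_no_plus Hplus.
case: (boolP (all (fun w => w < n) u)) => [/allP u_lt_n | /allPn [w wu]].
  by have [b [u_lt_b bn thr]] := IH u_lt_n Hn'; exists b; split => //; apply: leqW.
rewrite -leqNgt => nw; have wn : w = n by apply/eqP; rewrite eqn_leq -ltnS u_lt.
case: u_no_mu; apply: realizes_sub Hn' => v; rewrite inE => /orP [/eqP -> | //].
by rewrite -wn.
Qed.

(* Thresholds are unique: if [b < b'] and [b] is a threshold, then [b' :: u]
   already realizes [(m1 + 1) :: mt]. *)
Lemma threshold_unique b b' : {in u, forall w, w < b} -> {in u, forall w, w < b'} ->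
  threshold b -> threshold b' -> b = b'.
Proof.
move=> u_lt u_lt' [Hb nHb] [Hb' nHb']; case: (ltngtP b b') => // [lt|lt].
- by case: nHb'; have := realizes_raise_top u_lt mt_lt lt u_no_mu Hb.
- by case: nHb; have := realizes_raise_top u_lt' mt_lt lt u_no_mu Hb'.
Qed.
End Threshold.

Lemma split_largest x t : sorted geq (x :: t) ->
  exists k u, [/\ x :: t = nseq k.+1 x ++ u, {in u, forall w, w < x} & sorted geq u].
Proof.
elim: t => [|y t IH] /=; first by exists 0, [::].
move=> /andP [xy Syt]; case: (ltngtP y x) xy Syt => // [yx | ->] _ Syt.
- exists 0, (y :: t); split => // w; rewrite inE => /orP [/eqP -> // | wt].
  by have /allP /(_ w wt) := order_path_min (rev_trans leq_trans) Syt; lia.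
- by have [k [u [-> u_lt Su]]] := IH Syt; exists k.+1, u.
Qed.

Lemma partition_split_largest x t : is_partition (x :: t) ->
  exists k u,
    [/\ x :: t = nseq k.+1 x ++ u, {in u, forall w, w < x} & is_partition u].
Proof.
move=> /andP [Sa Pos_a]; have [k [u [aE u_lt Su]]] := split_largest Sa.
exists k, u; split=> //; rewrite /is_partition Su; apply/allP => v vu.
by apply: (allP Pos_a); rewrite aE mem_cat vu orbT.
Qed.

Lemma mult_largest_nseq m x u : {in u, forall w, w < x} ->
  mult_largest (nseq m.+1 x ++ u) = m.+1.
Proof.
move=> u_lt; rewrite /mult_largest count_cat /= count_nseq eqxx.
rewrite (count_memPn _); first by rewrite /=; lia.
by apply/negP => /u_lt; rewrite ltnn.
Qed.

Lemma mem_nseq_cat m b (s : seq nat) : 0 < m -> nseq m b ++ s =i b :: s.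
Proof. by move=> m_pos v; rewrite mem_cat mem_nseq m_pos inE. Qed.

Lemma psum_nseq m b w s : psum (nseq m b ++ s) (nseq m w) = nseq m (b + w) ++ s.
Proof.
apply: (@eq_from_nth _ 0); rewrite /psum size_mkseq !size_cat !size_nseq; first lia.
move=> i i_lt; rewrite nth_mkseq // !nth_cat !size_nseq !nth_nseq.
by case: ltnP => //= _; rewrite addn0.
Qed.

Lemma psum_one m1 mt : psum (m1 :: mt) [:: 1] = m1.+1 :: mt.
Proof.
apply: (@eq_from_nth _ 0); rewrite /psum size_mkseq /=; first lia.
move=> [|[|i]] i_lt; rewrite nth_mkseq //= ?addn1 ?addn0 //.
Qed.

Lemma is_partition_nseq_cat m b u : is_partition u -> {in u, forall w, w < b} ->
  0 < b -> is_partition (nseq m b ++ u).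
Proof.
move=> /andP [Su Pu] u_lt b_pos; rewrite /is_partition all_cat all_nseq b_pos orbT Pu.
case: m => [|m]; rewrite /= ?andbT //; rewrite cat_path; apply/andP; split.
  by elim: m => //= m ->; rewrite leqnn.
have -> : last b (nseq m b) = b by elim: m.
case: u Su u_lt {Pu} => //= y u -> u_lt.
by rewrite andbT ltnW ?u_lt ?mem_head.
Qed.

Lemma head_lt_iff u b : sorted geq u -> 0 < b ->
  head 0 u < b <-> {in u, forall w, w < b}.
Proof.
case: u => [|y u] /= Su b_pos; first by split.
split=> [yb w | u_lt]; last exact/u_lt/mem_head.
rewrite inE => /orP [/eqP -> // | wu].
by have /allP /(_ w wu) := order_path_min (rev_trans leq_trans) Su; lia.
Qed.

Lemma is_strict_cons m1 mt : is_strict (m1 :: mt) ->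
  [/\ 0 < m1, {in mt, forall y, y < m1},
      is_strict (m1.+1 :: mt) & is_strict (m1.+1 :: m1 :: mt)].
Proof.
rewrite !is_strictE /= => /andP [Smt /andP [m1_pos Pmt]].
have mt_lt : {in mt, forall y, y < m1}.
  by apply/allP; apply: order_path_min Smt; apply: rev_trans; apply: ltn_trans.
split=> //; last by rewrite ltnSn Smt m1_pos Pmt.
rewrite Pmt andbT; case: mt Smt mt_lt {Pmt} => //= y mt /andP [_ ->] mt_lt.
by rewrite andbT; apply/ltnW/mt_lt/mem_head.
Qed.

Lemma contains_one x t : is_partition (x :: t) -> contains (x :: t) [:: 1].
Proof.
move=> Pa; have x_pos : 0 < x by case/andP: Pa => _ /andP [].
apply: realizes_contains => //; exists (minn^~ 1); first by split=> // -[|u].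
by apply: realized_by_cons => //; exists x; rewrite ?mem_head //; apply/minn_idPr.
Qed.

Lemma decomp_nseq_cat mu m x u b1 bs w : 0 < m -> is_partition u ->
  decomp mu (nseq m x ++ u) m b1 bs w <->
  [/\ bs = u, x = b1 + w, head 0 u < b1 & inQ mu (psum mu [:: 1]) (nseq m b1 ++ u)].
Proof.
move=> m_pos Pu; rewrite /decomp psum_nseq; split.
- move=> [_ [hb [Q E]]].
  have bs_u : bs = u.
    by have := congr1 (drop m) E; rewrite !drop_size_cat ?size_nseq.
  have x_eq : x = b1 + w.
    by have := congr1 (head 0) E; rewrite -(prednK m_pos).
  by subst bs.
- by move=> [-> -> hb Q].
Qed.

Lemma inQ_threshold m1 mt u m b : is_strict (m1 :: mt) -> is_partition u ->
  {in u, forall w, w < b} -> 0 < m ->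
  inQ (m1 :: mt) (m1.+1 :: mt) (nseq m b ++ u) <-> threshold m1 mt u b.
Proof.
move=> Smu Pu u_lt m_pos; have [m1_pos _ Splus _] := is_strict_cons Smu.
have eq_mem := mem_nseq_cat b u m_pos.
split=> [[Pa [_ [Ca Aa]]] | [R nR]].
  split; first exact/(realizes_eq_mem _ eq_mem)/contains_realizes.
  by move=> /(realizes_eq_mem _ eq_mem) /(realizes_contains Pa Splus).
have b_pos := realizes_top_pos u_lt m1_pos R.
have Pa := is_partition_nseq_cat m Pu u_lt b_pos.
split=> //; split.
  by apply: leq_trans b_pos (mem_le_sumn _); rewrite eq_mem mem_head.
split; first exact/(realizes_contains Pa Smu)/(realizes_eq_mem _ eq_mem).
by move=> /contains_realizes /(realizes_eq_mem _ eq_mem).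
Qed.

Unset Implicit Arguments.

Theorem mainTheorem11 (mu alpha : seq nat) :
  is_strict mu -> inQ mu (mubar mu) alpha ->
  exists b1 bs w,
    decomp mu alpha (mult_largest alpha) b1 bs w /\
    forall b1' bs' w', decomp mu alpha (mult_largest alpha) b1' bs' w' ->
      b1' = b1 /\ bs' = bs /\ w' = w.
Proof.
move=> Smu [Pa [wa [Ca Aa]]].
case: alpha Pa wa Ca Aa => [|x t] // Pa _ Ca Aa.
case: mu Smu Ca Aa => [|m1 mt] Smu Ca Aa; first by case: Aa; apply: contains_one.
have [m1_pos mt_lt _ Smubar] := is_strict_cons Smu.
have [k [u [aE u_lt Pu]]] := partition_split_largest Pa.
have [Su _] := andP Pu.
have eq_mem : x :: t =i x :: u by rewrite aE; apply: mem_nseq_cat.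
have Ra : realizes (x :: u) (m1 :: mt).
  exact/(realizes_eq_mem _ eq_mem)/contains_realizes.
have nRa : ~ realizes (x :: u) (m1.+1 :: m1 :: mt).
  by move=> /(realizes_eq_mem _ eq_mem) /(realizes_contains Pa Smubar).
have [u_no_mu u_no_plus] := avoid_add_top u_lt mt_lt nRa.
have [b [u_lt_b b_x thr]] := threshold_exists mt_lt u_no_mu u_no_plus u_lt Ra.
have b_pos : 0 < b := realizes_top_pos u_lt_b m1_pos thr.1.
rewrite aE mult_largest_nseq //; exists b, u, (x - b); split.
  apply/decomp_nseq_cat => //; split=> //; first by rewrite subnKC.
    exact/(head_lt_iff Su b_pos).
  by rewrite psum_one; apply/inQ_threshold.
move=> b' bs' w' /decomp_nseq_cat [//|//| -> x_eq hb' Q].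
have u_lt_b' := (head_lt_iff Su (leq_ltn_trans (leq0n _) hb')).1 hb'.
rewrite psum_one in Q.
have b_eq := threshold_unique mt_lt u_no_mu u_lt_b u_lt_b' thr
  ((inQ_threshold Smu Pu u_lt_b' (ltn0Sn k)).1 Q).
by subst b'; split=> //; split=> //; lia.
Qed.
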